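(* For any CQAP $Q$ whose fracture $Q_\dagger$ is hierarchical, with static width $\mathsf w=\mathsf w(Q)$ and dynamic width $\delta=\delta(Q)$, either $\delta=\mathsf w$ or $\delta=\mathsf w-1$.
   Context: CQAP. A conjunctive query with free access patterns (CQAP) has the form $Q(\mathcal O\mid\mathcal I)=R_1(\mathcal X_1),\dots,R_n(\mathcal X_n)$, where $R_i(\mathcal X_i)$ are atoms, $\mathit{vars}(Q)=\bigcup_i\mathcal X_i$, and the free variables $\mathcal O\cup\mathcal I\subseteq\mathit{vars}(Q)$ are partitioned into input variables $\mathcal I$ and output variables $\mathcal O$ (either may be empty); the other variables are bound. $\mathit{atoms}(X)$ denotes the set of atoms whose schema contains $X$. A CQAP is hierarchical if for all variables $A,B$: $\mathit{atoms}(A)\subseteq\mathit{atoms}(B)$, or $\mathit{atoms}(B)\subseteq\mathit{atoms}(A)$, or $\mathit{atoms}(A)\cap\mathit{atoms}(B)=\emptyset$. Fracture. The fracture $Q_\dagger$ of $Q$ is obtained by: replacing every occurrence of an input variable in every atom by a distinct fresh variable; computing the connected components of the hypergraph of the resulting query (vertices = variables, hyperedges = atom schemas); within each connected component, replacing all fresh variables originating from the same input variable of $Q$ by one fresh input variable. Output and bound variables are unchanged. Variable orders. A variable order (VO) $\omega$ for a CQAP is a rooted forest with exactly one node per variable such that the variables of each atom lie on a common root-to-leaf path; $\mathit{dep}_\omega(X)$ is the set of ancestors $Y$ of $X$ that occur in a common atom with some variable of the subtree rooted at $X$. The extended VO adds leaves: each atom becomes a child of its lowest variable; then, processing variables bottom-up,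 at each variable $X$ with $\mathcal S=\{X\}\cup\mathit{dep}_\omega(X)$ and $\mathcal R$ the set of atoms below $X$, consider candidate indicator atoms $I_{\mathcal Z}R(\mathcal Z)$ for atoms $R(\mathcal Y)$ not in $\mathcal R$ with $\mathcal Z=\mathcal Y\cap\mathcal S\neq\emptyset$; run the GYO reduction (repeatedly delete a vertex occurring in only one hyperedge and a hyperedge contained in another) on the hypergraph whose hyperedges are the schemas of the candidates and of $\mathcal R$, and add as children of $X$ those candidates whose hyperedges survive in the fixpoint. All VOs are extended. A VO is access-top if no bound variable is an ancestor of a free variable and no output variable is an ancestor of an input variable. Widths. For a VO $\omega$ and variable $X$, $\omega_X$ is the subtree rooted at $X$ and $Q_X$ the join of all atoms and indicator atoms at the leaves of $\omega_X$. For a variable set $\mathcal F$, $\rho^*_{Q_X}(\mathcal F)$ is the minimum of $\sum_e\lambda_e$ over $\lambda_e\in[0,1]$ indexed by atoms $e$ of $Q_X$ subject to $\sum_{e\ni Y}\lambda_e\ge1$ for all $Y\in\mathcal F$ (so $\rho^*(\emptyset)=0$). $\mathsf w(\omega)=\max_X\rho^*_{Q_X}(\{X\}\cup\mathit{dep}_\omega(X))$ and $\delta(\omega)=\max_X\max_{R(\mathcal Y)}\rho^*_{Q_X}((\{X\}\cup\mathit{dep}_\omega(X))\setminus\mathcal Y)$, the inner maximum over atoms and indicator atoms $R(\mathcal Y)$ at leaves of $\omega_X$. For a CQAP $Q$, $(\delta(Q),\mathsf w(Q))$ is the lexicographically smallest pair $(\delta(\omega),\mathsf w(\omega))$ (first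 minimise $\delta$, then $\mathsf w$) over all access-top VOs $\omega$ of $Q_\dagger$. *)

From HB Require Import structures.
From mathcomp Require Import all_boot all_order all_algebra.
From mathcomp Require Import reals.

Set Implicit Arguments.
Unset Strict Implicit.
Unset Printing Implicit Defensive.

Import Order.TTheory GRing.Theory Num.Theory.
Local Open Scope ring_scope.

(* CQAPs.  A CQAP Q(O|I) = R_1(X_1),...,R_n(X_n) is given by           *)
(*  - a finite type V of variable names and a finite type A indexing   *)
(*    the atoms,                                                       *)
(*  - sch : A -> {set V}, the schema X_i of each atom,                 *)
(*  - kind : V -> vkind, saying whether a variable is an input, an     *)
(*    output or a bound variable.                                      *)
(* vars(Q) is the union of the schemas (qvars).  Names of relation     *)
(* symbols play no role in any notion used below, so atoms are just    *)
(* indices with a schema.                                              *)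

Inductive vkind := Inp | Out | Bnd.

Definition isInp (k : vkind) : bool := if k is Inp then true else false.
Definition isOut (k : vkind) : bool := if k is Out then true else false.
Definition isBnd (k : vkind) : bool := if k is Bnd then true else false.
Definition isFree (k : vkind) : bool := ~~ isBnd k.

Definition qvars (V A : finType) (sch : A -> {set V}) : {set V} :=
  \bigcup_(a : A) sch a.

Definition atoms_of (V A : finType) (sch : A -> {set V}) (x : V) : {set A} :=
  [set a | x \in sch a].

Definition hierarchical (V A : finType) (sch : A -> {set V}) : Prop :=
  forall x y : V,
    atoms_of sch x \subset atoms_of sch y \/
    atoms_of sch y \subset atoms_of sch x \/
    [disjoint atoms_of sch x & atoms_of sch y].

(* Fracture.  After replacing every occurrence of an input variable by *)
(* a fresh variable, two atoms are in the same connected component iff *)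
(* they are linked by a chain of atoms sharing non-input variables.    *)
(* The fresh variables of input x in the component C (a set of atoms)  *)
(* are merged into the variable (x, C); a non-input variable x is      *)
(* renamed (x, set0).  Variables of the fracture live in V * {set A}.  *)

Definition fr_adj (V A : finType) (sch : A -> {set V}) (kind : V -> vkind)
  : rel A :=
  fun a b => [exists x : V, [&& ~~ isInp (kind x), x \in sch a & x \in sch b]].

Definition fr_comp (V A : finType) (sch : A -> {set V}) (kind : V -> vkind)
  (a : A) : {set A} :=
  [set b | connect (fr_adj sch kind) a b].

Definition fr_sch (V A : finType) (sch : A -> {set V}) (kind : V -> vkind)
  (a : A) : {set (V * {set A})} :=
  [set (x, if isInp (kind x) then fr_comp sch kind a else set0) | x in sch a].

Definition fr_kind (V A : finType) (kind : V -> vkind) (p : V * {set A})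
  : vkind := kind p.1.

(* Variable orders, as parent functions par : V -> option V.           *)

Definition up (V : Type) (par : V -> option V) (n : nat) (x : V) : option V :=
  iter n (fun o => obind par o) (Some x).

Definition anc (V : finType) (par : V -> option V) (y x : V) : bool :=
  [exists n : 'I_#|V|.+1, (0 < n)%N && (up par n x == Some y)].

Definition ancs (V : finType) (par : V -> option V) (y x : V) : bool :=
  (y == x) || anc par y x.

(* par is a rooted forest with exactly one node per variable of Q whose *)
(* atoms' variables lie on root-to-leaf paths (i.e. are pairwise        *)
(* comparable w.r.t. the ancestor relation).                           *)
Definition is_VO (V A : finType) (sch : A -> {set V}) (par : V -> option V)
  : Prop :=
  [/\ (forall x, x \notin qvars sch -> par x = None),
      (forall x y, par x = Some y -> y \in qvars sch),
      (forall x, up par #|V| x = None) &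
      (forall a x y, x \in sch a -> y \in sch a ->
          [\/ x = y, anc par x y | anc par y x])].

Definition access_top (V : finType) (kind : V -> vkind) (par : V -> option V)
  : Prop :=
  forall x y, anc par y x ->
    (isBnd (kind y) -> ~~ isFree (kind x)) /\
    (isOut (kind y) -> ~~ isInp (kind x)).

Definition dep (V A : finType) (sch : A -> {set V}) (par : V -> option V)
  (X : V) : {set V} :=
  [set Y | anc par Y X &&
     [exists a, (Y \in sch a) && [exists Z in sch a, ancs par X Z]]].

Definition lowest (V A : finType) (sch : A -> {set V}) (par : V -> option V)
  (a : A) (x : V) : bool :=
  (x \in sch a) && [forall y in sch a, ancs par y x].

(* atom a is a leaf of omega_X (it is a child of its lowest variable) *)
Definition below (V A : finType) (sch : A -> {set V}) (par : V -> option V)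
  (X : V) (a : A) : bool :=
  [exists x, lowest sch par a x && ancs par X x].

(* GYO reduction on an indexed list of hyperedges (None = deleted).    *)
(* A vertex step deletes all vertices occurring in exactly one edge    *)
(* (these deletions do not interfere); an edge step deletes the first  *)
(* edge contained in another live edge (ties between equal edges:      *)
(* the one with larger index is deleted).                              *)

Definition gyo_cnt (V : finType) (st : seq (option {set V})) (v : V) : nat :=
  count (fun o : option {set V} => if o is Some e then v \in e else false) st.

Definition gyo_vstep (V : finType) (st : seq (option {set V}))
  : seq (option {set V}) :=
  map (omap (fun e : {set V} => [set v in e | gyo_cnt st v != 1%N])) st.

Definition gyo_removable (V : finType) (st : seq (option {set V})) (i : nat)
  : bool :=
  if nth (None : option {set V}) st i is Some e then
    has (fun j => (j != i) &&
           (if nth (None : option {set V}) st j is Some f then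
              (e \subset f) && ((e != f) || (j < i)%N)
            else false)) (iota 0 (size st))
  else false.

Fixpoint gyo (V : finType) (fuel : nat) (st : seq (option {set V}))
  : seq (option {set V}) :=
  if fuel is n.+1 then
    let st1 := gyo_vstep st in
    let i := find (gyo_removable st1) (iota 0 (size st1)) in
    if (i < size st1)%N then gyo n (set_nth None st1 i None) else st1
  else st.

Definition gyo_fix (V : finType) (es : seq {set V}) : seq (option {set V}) :=
  gyo (size es).+1 (map Some es).

(* Among the candidate hyperedges cands (appended after the hyperedges   *)
(* Rl of the leaves below X), keep those whose hyperedge survives in the *)
(* GYO fixpoint (present and non-empty); return their schemas.          *)
Definition gyo_select (V : finType) (Rl cands : seq {set V}) : seq {set V} :=
  let fin := drop (size Rl) (gyo_fix (Rl ++ cands)) in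
  [seq p.1 | p <- zip cands fin &
     (if p.2 is Some e then e != set0 else false)].

(* Candidate indicator schemas Z = Y cap S at X, for atoms R(Y) not     *)
(* below X with Z nonempty.                                             *)
Definition cands (V A : finType) (sch : A -> {set V}) (par : V -> option V)
  (X : V) (S : {set V}) : seq {set V} :=
  [seq sch a :&: S | a <- enum A & ~~ below sch par X a && (sch a :&: S != set0)].

(* Indicator atoms added as children of X, computed bottom-up: the set   *)
(* R of leaves below X consists of the atoms below X and the indicator   *)
(* atoms already added at strict descendants of X.                      *)
Fixpoint ind (V A : finType) (sch : A -> {set V}) (par : V -> option V)
  (fuel : nat) (X : V) : seq {set V} :=
  if fuel is n.+1 then
    let S := X |: dep sch par X in
    let Rl := [seq sch a | a <- enum A & below sch par X a] ++
              flatten [seq ind sch par n Y | Y <- enum V & anc par X Y] in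
    gyo_select Rl (cands sch par X S)
  else [::].

(* Schemas of the atoms and indicator atoms at the leaves of omega_X *)
Definition QX (V A : finType) (sch : A -> {set V}) (par : V -> option V)
  (X : V) : seq {set V} :=
  [seq sch a | a <- enum A & below sch par X a] ++
  flatten [seq ind sch par #|V| Y | Y <- enum V & ancs par X Y].

Definition rho_star (R : realType) (V : finType) (E : seq {set V})
  (F : {set V}) : R :=
  reals.inf (fun r : R => exists lam : nat -> R,
        [/\ (forall i, (i < size E)%N -> 0 <= lam i <= 1),
            (forall Y, Y \in F ->
               1 <= \sum_(i < size E | Y \in nth set0 E i) lam i) &
            r = \sum_(i < size E) lam i]).

Definition wVO (R : realType) (V A : finType) (sch : A -> {set V})
  (par : V -> option V) : R :=
  \big[Num.max/0]_(X in qvars sch)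
     rho_star R (QX sch par X) (X |: dep sch par X).

Definition deltaVO (R : realType) (V A : finType) (sch : A -> {set V})
  (par : V -> option V) : R :=
  \big[Num.max/0]_(X in qvars sch)
    \big[Num.max/0]_(e <- QX sch par X)
       rho_star R (QX sch par X) ((X |: dep sch par X) :\: e).

(* (d, w) = (delta(Q), w(Q)): the lexicographically smallest pair        *)
(* (delta(omega), w(omega)) over access-top VOs omega of the fracture.  *)
Definition cqap_widths (R : realType) (V A : finType) (sch : A -> {set V})
  (kind : V -> vkind) (d w : R) : Prop :=
  let sch' := fr_sch sch kind in
  let kind' := @fr_kind V A kind in
  (exists par, [/\ is_VO sch' par, access_top kind' par,
                   deltaVO R sch' par = d & wVO R sch' par = w]) /\
  (forall par, is_VO sch' par -> access_top kind' par ->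
     d < deltaVO R sch' par \/ (d = deltaVO R sch' par /\ w <= wVO R sch' par)).

From HB Require Import structures.
From mathcomp Require Import all_boot all_order all_algebra.
From mathcomp Require Import reals.
Import Order.TTheory GRing.Theory Num.Theory.

Set Implicit Arguments.
Unset Strict Implicit.
Unset Printing Implicit Defensive.

(* We prove δ(ω) <= w(ω) <= δ(ω) + 1 with both widths natural numbers, for *)
(* EVERY variable order ω of a hierarchical query; the optimal access-top  *)
(* order of Q† is one of them.           *)
(*  2. No indicator atom survives.  Each candidate indicator schema at X   *)
(*     is contained in an atom below X (cand_cover).  The invariant that   *)
(*     every live hyperedge after the prefix of atoms below X lies in a    *)
(*     live hyperedge of the prefix is preserved by the GYO steps and      *)
(*     forces every candidate to be deleted, so Q_X is exactly the join of *)
(*     the atoms below X (QX_below).                                       *)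
(*  3. Fractional edge covers.  Removing the vertices of one hyperedge     *)
(*     lowers ρ* by at most 1 (rho_star_delete), and for a laminar family  *)
(*     of incidence sets ρ* equals the number of inclusion-minimal         *)
(*     incidence sets (rho_star_laminar), a natural number.                *)
(*  4. Atom sets of a hierarchical query are laminar, which gives the two  *)
(*     inequalities and integrality of the widths; the theorem follows.    *)

Section Ancestry.
Variables (V : finType) (par : V -> option V).

Lemma up_None n : iter n (fun o => obind par o) None = None.
Proof. by elim: n => //= n ->. Qed.

Lemma upD n m x :
  up par (m + n) x = if up par n x is Some y then up par m y else None.
Proof. by rewrite /up iterD; case: (iter n _ _) => [y|] //; exact: up_None. Qed.

Hypothesis par_acyclic : forall x, up par #|V| x = None.

Lemma up_ge x k : (#|V| <= k)%N -> up par k x = None.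
Proof. by move=> le_Vk; rewrite -(subnK le_Vk) upD par_acyclic. Qed.

Lemma ancP y x :
  reflect (exists2 n, (0 < n)%N & up par n x = Some y) (anc par y x).
Proof.
apply: (iffP existsP) => [[n /andP[n_gt0 /eqP up_n]]|[n n_gt0 up_n]]; first by exists n.
have lt_nV : (n < #|V|.+1)%N.
  by rewrite ltnS leqNgt; apply/negP => /ltnW/(up_ge x); rewrite up_n.
by exists (Ordinal lt_nV); rewrite /= n_gt0 up_n eqxx.
Qed.

Lemma anc_trans x y z : anc par y x -> anc par z y -> anc par z x.
Proof.
move=> /ancP[n n_gt0 up_n] /ancP[m m_gt0 up_m].
by apply/ancP; exists (m + n); rewrite ?addn_gt0 ?m_gt0 // upD up_n.
Qed.

Lemma anc_irr x : ~~ anc par x x.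
Proof.
apply/negP => /ancP[n n_gt0 up_n].
have up_nk k : up par (n * k) x = Some x.
  by elim: k => [|k IHk]; rewrite ?muln0 // mulnS upD IHk.
by move: (up_nk #|V|); rewrite up_ge // leq_pmull.
Qed.

Lemma ancs_trans x y z : ancs par y x -> ancs par z y -> ancs par z x.
Proof.
rewrite /ancs => /predU1P[->|yx] /predU1P[->|zy]; rewrite ?eqxx ?yx ?zy ?orbT //.
by rewrite (anc_trans yx zy) orbT.
Qed.

End Ancestry.

Lemma nth_map_omap (T U : Type) (g : T -> U) (s : seq (option T)) i :
  nth None (map (omap g) s) i = omap g (nth None s i).
Proof. by elim: s i => [|o s IHs] [|i] //=. Qed.

Lemma nth_map_Some (T : Type) (x0 : T) (s : seq T) i :
  nth None (map Some s) i = if (i < size s)%N then Some (nth x0 s i) else None.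
Proof.
case: ltnP => [lt_is|le_si]; first by rewrite (nth_map x0).
by rewrite nth_default ?size_map.
Qed.

Lemma nth_Some_size (T : Type) (s : seq (option T)) i e :
  nth None s i = Some e -> (i < size s)%N.
Proof. by move=> s_i; rewrite ltnNge; apply/negP => /(nth_default None); rewrite s_i. Qed.

Lemma count_set_nth (T : Type) (s : seq (option T)) k e :
  nth None s k = Some e -> (count isSome (set_nth None s k None)).+1 = count isSome s.
Proof.
elim: s k => [|o s IHs] [|k] //=; first by move=> ->.
by move=> /IHs <-; rewrite addnS.
Qed.

Section GYOReduction.
Variable V : finType.
Implicit Types (st : seq (option {set V})) (p : nat).

(* The invariant of the GYO reduction in a hierarchical query: every live *)
(* hyperedge from position p on is contained in a live hyperedge before p. *)
Definition prefix_dominated p st : Prop :=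
  forall i e, (p <= i)%N -> nth None st i = Some e ->
    exists j f, [/\ (j < p)%N, nth None st j = Some f & e \subset f].

(* Vertex deletion restricts all hyperedges to the same vertex set. *)
Lemma vstep_dominated p st : prefix_dominated p st -> prefix_dominated p (gyo_vstep st).
Proof.
move=> dom i e le_pi; rewrite /gyo_vstep nth_map_omap.
case st_i: (nth None st i) => [e0|] //= [<-].
have [j [f [lt_jp st_j sub_ef]]] := dom i e0 le_pi st_i.
exists j, [set v in f | gyo_cnt st v != 1%N]; split => //.
  by rewrite nth_map_omap st_j.
by apply/subsetP => v; rewrite !inE => /andP[/(subsetP sub_ef) -> ->].
Qed.

Lemma count_vstep st : count isSome (gyo_vstep st) = count isSome st.
Proof. by rewrite /gyo_vstep count_map; apply: eq_count => -[]. Qed.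

(* Deleting a removable edge f of the prefix that dominated e: f lies in a *)
(* live edge g, which is in the prefix or is dominated by a prefix edge h; *)
(* h is not f, since then f = g although g comes after f.                 *)
Lemma removal_dominated p st k :
  prefix_dominated p st -> gyo_removable st k ->
  prefix_dominated p (set_nth None st k None).
Proof.
move=> dom rem_k i e le_pi; rewrite nth_set_nth /=; case: eqP => // _ st_i.
have [j [f [lt_jp st_j sub_ef]]] := dom i e le_pi st_i.
have [eq_jk|ne_jk] := eqVneq j k; last first.
  by exists j, f; rewrite nth_set_nth /= (negbTE ne_jk).
subst k; move: rem_k; rewrite /gyo_removable st_j => /hasP[l _ /andP[ne_lj]].
case st_l: (nth None st l) => [g|] // /andP[sub_fg strict_fg].
have [lt_lp|le_pl] := ltnP l p.
  by exists l, g; rewrite nth_set_nth /= (negbTE ne_lj) (subset_trans sub_ef).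
have [m [h [lt_mp st_m sub_gh]]] := dom l g le_pl st_l.
have ne_mj : m != j.
  apply: contraTneq strict_fg => eq_mj; move: st_m; rewrite eq_mj st_j => -[eq_fh].
  have -> : f == g by rewrite eqEsubset sub_fg eq_fh sub_gh.
  by rewrite /= -leqNgt (ltnW (leq_trans lt_jp le_pl)).
exists m, h; rewrite nth_set_nth /= (negbTE ne_mj); split => //.
exact: subset_trans sub_ef (subset_trans sub_fg sub_gh).
Qed.

Lemma terminal_dominated p st :
  prefix_dominated p st -> ~~ has (gyo_removable st) (iota 0 (size st)) ->
  forall i, (p <= i)%N -> nth None st i = None.
Proof.
move=> dom no_rem i le_pi; case st_i: (nth None st i) => [e|] //.
case/hasP: no_rem; exists i; first by rewrite mem_iota (nth_Some_size st_i).
have [j [f [lt_jp st_j sub_ef]]] := dom i e le_pi st_i.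
have lt_ji := leq_trans lt_jp le_pi.
rewrite /gyo_removable st_i; apply/hasP; exists j.
  by rewrite mem_iota (nth_Some_size st_j).
by rewrite st_j sub_ef lt_ji orbT (ltn_eqF lt_ji).
Qed.

Lemma gyo_dominated p fuel st :
  prefix_dominated p st -> (count isSome st < fuel)%N ->
  forall i, (p <= i)%N -> nth None (gyo fuel st) i = None.
Proof.
elim: fuel st => [|n IHn] st dom // lt_cnt /=.
set st1 := gyo_vstep st; have dom1 : prefix_dominated p st1 by apply: vstep_dominated.
case: ifP => [found|not_found]; last first.
  by apply: terminal_dominated; rewrite // has_find size_iota not_found.
set k := find _ _ in found *.
have rem_k : gyo_removable st1 k.
  have has_rem : has (gyo_removable st1) (iota 0 (size st1)) by rewrite has_find size_iota.
  by have := nth_find 0 has_rem; rewrite -/k nth_iota.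
have [e st1_k] : exists e, nth None st1 k = Some e.
  by move: rem_k; rewrite /gyo_removable; case: (nth None st1 k) => // e _; exists e.
apply: IHn; first exact: removal_dominated.
by rewrite -ltnS (count_set_nth st1_k) count_vstep.
Qed.

Lemma gyo_select_nil (Rl c : seq {set V}) :
  (forall i, (size Rl <= i)%N -> nth None (gyo_fix (Rl ++ c)) i = None) ->
  gyo_select Rl c = [::].
Proof.
move=> tail_None; rewrite /gyo_select.
have : forall o, o \in drop (size Rl) (gyo_fix (Rl ++ c)) -> o = None.
  by move=> o /(nthP None)[t _ <-]; rewrite nth_drop tail_None ?leq_addr.
move: (drop _ _) => fin fin_None; clear tail_None.
elim: c fin fin_None => [|x c IHc] [|o s] //= s_None.
by rewrite (s_None o (mem_head _ _)) /= IHc // => o' s_o'; apply: s_None; rewrite inE s_o' orbT.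
Qed.

End GYOReduction.

Section HierarchicalOrders.
Variables (V A : finType) (sch : A -> {set V}) (par : V -> option V).
Hypothesis par_VO : is_VO sch par.

Let par_acyclic : forall x, up par #|V| x = None.
Proof. by case: par_VO. Qed.

(* The variables of an atom form a chain, so the atom has a lowest one:   *)
(* the variable with the most ancestors.                                 *)
Lemma lowest_exists a x : x \in sch a -> exists L, lowest sch par a L.
Proof.
case: par_VO => _ _ _ chain x_a.
have [L L_a L_max] := arg_maxnP (fun L => #|[set y | anc par y L]|) x_a.
exists L; apply/andP; split => //; apply/forallP => y; apply/implyP => y_a.
case: (chain a y L y_a L_a) => [->|yL|Ly]; rewrite /ancs ?eqxx ?yL ?orbT //.
(* a variable of a strictly below L would have strictly more ancestors *)
have := L_max y y_a; apply: contraTT => _; rewrite -ltnNge; apply: proper_card; apply/properP; split.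
  by apply/subsetP => z; rewrite !inE => /(anc_trans par_acyclic Ly).
by exists L; rewrite !inE ?Ly // (negbTE (anc_irr par_acyclic L)).
Qed.

Lemma below_of X Z b : Z \in sch b -> ancs par X Z -> below sch par X b.
Proof.
move=> Z_b XZ; have [L low_L] := lowest_exists Z_b.
apply/existsP; exists L; rewrite low_L /=.
have /andP[_ /forallP/(_ Z)] := low_L; rewrite Z_b /= => ZL.
exact: (ancs_trans par_acyclic ZL XZ).
Qed.

Hypothesis sch_hier : hierarchical sch.

(* In a hierarchical query, each candidate indicator schema at X is         *)
(* contained in an atom below X: its variable with the fewest atoms lies in *)
(* dep(X), hence in an atom below X, and hierarchy forces that atom to      *)
(* contain every other variable of the candidate.                           *)
Lemma cand_cover X a :
  ~~ below sch par X a -> sch a :&: (X |: dep sch par X) != set0 ->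
  exists2 b, below sch par X b & sch a :&: (X |: dep sch par X) \subset sch b.
Proof.
set S := X |: dep sch par X => not_below /set0Pn[q0 q0_c].
have [q /setIP[q_a q_S] q_min] := arg_minnP (fun q => #|atoms_of sch q|) q0_c.
have ne_qX : q != X.
  by apply: contraNneq not_below => eq_qX; apply: (below_of q_a); rewrite eq_qX /ancs eqxx.
move: q_S; rewrite /S in_setU1 (negbTE ne_qX) inE => /andP[_ /existsP[b /andP[q_b]]].
case/existsP => Z /andP[Z_b XZ]; exists b; first exact: below_of Z_b XZ.
apply/subsetP => y y_c; have /setIP[y_a _] := y_c.
suff /subsetP/(_ b) : atoms_of sch q \subset atoms_of sch y by rewrite !inE; apply.
have [//|[sub_yq|disj]] := sch_hier q y.
  have -> // : atoms_of sch y = atoms_of sch q.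
  by apply/eqP; rewrite eqEcard sub_yq q_min.
by move: disj; rewrite -setI_eq0 => /eqP/setP/(_ a); rewrite !inE q_a y_a.
Qed.

(* Hence the GYO invariant holds initially, the prefix being the leaves below X. *)
Lemma cands_dominated X (Rl : seq {set V}) :
  {subset [seq sch b | b <- enum A & below sch par X b] <= Rl} ->
  prefix_dominated (size Rl) (map Some (Rl ++ cands sch par X (X |: dep sch par X))).
Proof.
set c := cands _ _ _ _ => below_Rl i e le_Ri; rewrite (nth_map_Some set0) size_cat.
case: ifP => // lt_i [<-]; rewrite nth_cat ltnNge le_Ri /=.
have : nth set0 c (i - size Rl) \in c by rewrite mem_nth // ltn_subLR.
case/mapP => a; rewrite mem_filter => /andP[/andP[not_below nonempty] _] ->.
have [b below_b sub_b] := cand_cover not_below nonempty.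
have b_Rl : sch b \in Rl by apply: below_Rl; rewrite map_f // mem_filter below_b mem_enum.
exists (index (sch b) Rl), (sch b); split; rewrite ?index_mem //.
by rewrite (nth_map_Some set0) size_cat ltn_addr ?index_mem // nth_cat index_mem b_Rl nth_index.
Qed.

Lemma ind_empty n X : ind sch par n X = [::].
Proof.
case: n => [|n] //=; apply: gyo_select_nil; apply: gyo_dominated.
  by apply: cands_dominated => s s_below; rewrite mem_cat s_below.
by rewrite count_map (@eq_count _ _ predT) // count_predT size_map.
Qed.

Lemma QX_below X : QX sch par X = [seq sch a | a <- enum A & below sch par X a].
Proof.
rewrite /QX; set inds := flatten _; suff -> : inds = [::] by rewrite cats0.
by rewrite /inds; elim: (enum V) => //= Y s IHs; case: ifP; rewrite //= ind_empty.
Qed.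

End HierarchicalOrders.

Local Open Scope ring_scope.

Lemma sum_le_subpred (R : numDomainType) (I : finType) (P Q : pred I) (f : I -> R) :
  (forall i, 0 <= f i) -> (forall i, P i -> Q i) ->
  \sum_(i | P i) f i <= \sum_(i | Q i) f i.
Proof.
move=> f_ge0 PQ; rewrite [X in _ <= X](bigID P) /=.
rewrite [X in _ <= X + _](eq_bigl P) => [|i]; first by rewrite lerDl sumr_ge0.
by case P_i: (P i); rewrite ?andbF // (PQ _ P_i).
Qed.

Section FractionalCovers.
Variables (R : realType) (V : finType) (E : seq {set V}).
Implicit Types (F : {set V}) (lam : nat -> R).

Definition frac_cover F lam : Prop :=
  (forall i, (i < size E)%N -> 0 <= lam i <= 1) /\
  (forall Y, Y \in F -> 1 <= \sum_(i < size E | Y \in nth set0 E i) lam i).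

Lemma rho_star_le F lam : frac_cover F lam -> rho_star R E F <= \sum_(i < size E) lam i.
Proof.
case=> lam01 lam_cov; apply: ge_inf; last by exists lam.
exists 0 => _ [lam' [lam'01 _ ->]]; apply: sumr_ge0 => i _.
by have /andP[] := lam'01 i (ltn_ord i).
Qed.

Lemma rho_star_ge F x :
  (exists lam, frac_cover F lam) ->
  (forall lam, frac_cover F lam -> x <= \sum_(i < size E) lam i) -> x <= rho_star R E F.
Proof.
move=> [lam0 [lam01 lam_cov]] x_le; apply: lb_le_inf; first by exists (\sum_(i < size E) lam0 i), lam0.
by move=> _ [lam [lam01' lam_cov' ->]]; apply: x_le.
Qed.

Definition coverable F : Prop :=
  forall Y, Y \in F -> exists i : 'I_(size E), Y \in nth set0 E i.

Lemma one_cover F : coverable F -> frac_cover F (fun=> 1).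
Proof.
move=> covF; split=> [i _|Y /covF[i Y_i]]; first by rewrite ler01 lexx.
by rewrite (bigD1 i) //= lerDl sumr_ge0 // => j _; rewrite ler01.
Qed.

Lemma rho_star_mono F F' : coverable F -> F' \subset F -> rho_star R E F' <= rho_star R E F.
Proof.
move=> covF sub_F'F; apply: rho_star_ge => [|lam [lam01 lam_cov]]; first by exists (fun=> 1); apply: one_cover.
by apply: rho_star_le; split=> // Y /(subsetP sub_F'F)/lam_cov.
Qed.

(* a cover of F minus e extended by weight 1 on e covers F.               *)
Lemma rho_star_delete F (i0 : 'I_(size E)) :
  coverable F -> rho_star R E F <= rho_star R E (F :\: nth set0 E i0) + 1.
Proof.
move=> covF; rewrite -lerBlDr.
have covF' : coverable (F :\: nth set0 E i0) by move=> Y /setDP[/covF].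
apply: rho_star_ge => [|lam [lam01 lam_cov]]; first by exists (fun=> 1); apply: one_cover.
pose lam' (m : nat) := if m == i0 then 1 else lam m.
have lam'01 i : (i < size E)%N -> 0 <= lam' i <= 1.
  by rewrite /lam'; case: eqP => _; [rewrite ler01 lexx|apply: lam01].
have lam'_ge0 (i : 'I_(size E)) : 0 <= lam' i by have /andP[] := lam'01 i (ltn_ord i).
rewrite lerBlDr; apply: le_trans (rho_star_le (lam := lam') _) _.
  split=> // Y Y_F; have [Y_e|Y_e] := boolP (Y \in nth set0 E i0).
    by rewrite (bigD1 i0) //= {1}/lam' eqxx lerDl sumr_ge0.
  apply: le_trans (lam_cov Y _) _; first by rewrite inE Y_e.
  rewrite le_eqVlt; apply/orP; left; apply/eqP/eq_bigr => i Y_i.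
  by rewrite /lam'; case: eqP => // eq_i; move: Y_i; rewrite eq_i (negbTE Y_e).
rewrite (bigD1 i0) //= [X in _ <= X + _](bigD1 i0) //= /lam' eqxx addrC lerD2r.
rewrite -[X in X <= _]add0r; apply: lerD; first by have /andP[] := lam01 i0 (ltn_ord i0).
rewrite le_eqVlt; apply/orP; left; apply/eqP/eq_bigr => i ne_i.
by case: eqP => // /ord_inj eq_i; rewrite eq_i eqxx in ne_i.
Qed.

Definition incident (Y : V) : {set 'I_(size E)} := [set i : 'I_(size E) | Y \in nth set0 E i].

Lemma sum_incident lam Y :
  \sum_(i < size E | Y \in nth set0 E i) lam i = \sum_(i in incident Y) lam i.
Proof. by apply: eq_bigl => i; rewrite inE. Qed.

(* Upper bound: if every vertex of F is incident to all hyperedges of some *)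
(* nonempty member of M, picking one hyperedge per member of M covers F.    *)
Lemma rho_star_le_transversal F (M : {set {set 'I_(size E)}}) :
  (forall Y, Y \in F -> exists2 r, r \in M & r \subset incident Y) ->
  (forall r, r \in M -> r != set0) ->
  rho_star R E F <= #|M|%:R.
Proof.
move=> hit nonempty.
pose pick_in (r : {set 'I_(size E)}) := [pick j in r].
set I := [set j | Some j \in pick_in @: M].
have card_I : (#|I| <= #|M|)%N.
  rewrite -(card_imset I (@Some_inj _)); apply: leq_trans (leq_imset_card pick_in M).
  by apply: subset_leq_card; apply/subsetP => _ /imsetP[j j_I ->]; rewrite inE in j_I.
pose lam m := if insub m is Some j then (if j \in I then 1 else 0) else 0 : R.
have lamE (j : 'I_(size E)) : lam j = if j \in I then 1 else 0 by rewrite /lam valK.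
have lam_ge0 (j : 'I_(size E)) : 0 <= lam j by rewrite lamE; case: ifP; rewrite ?ler01.
apply: le_trans (rho_star_le (lam := lam) _) _.
  split=> [i lt_i|Y /hit[r r_M sub_rY]].
    by rewrite -[i]/(val (Ordinal lt_i)) lamE; case: ifP; rewrite ?ler01 ?lexx.
  have [j j_r pick_r] : exists2 j, j \in r & [pick j in r] = Some j.
    by case: pickP => [j j_r|no_r]; [exists j | case/set0Pn: (nonempty r r_M) => j; rewrite no_r].
  have j_I : j \in I by rewrite inE -pick_r /pick_in imset_f.
  by rewrite sum_incident (bigD1 j) ?(subsetP sub_rY) //= lamE j_I lerDl sumr_ge0.
under eq_bigr do rewrite lamE.
by rewrite -big_mkcond sumr_const ler_nat.
Qed.

(* Lower bound: if M is a family of pairwise disjoint hyperedge sets each   *)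
(* containing the incidence set of a vertex of F, every fractional cover    *)
(* puts weight at least 1 on each member, hence costs at least #|M|.        *)
Lemma rho_star_ge_packing F (M : {set {set 'I_(size E)}}) :
  coverable F -> trivIset M ->
  (forall r, r \in M -> exists2 Y, Y \in F & incident Y \subset r) ->
  #|M|%:R <= rho_star R E F.
Proof.
move=> covF trivM pack.
apply: rho_star_ge => [|lam [lam01 lam_cov]]; first by exists (fun=> 1); apply: one_cover.
have lam_ge0 (j : 'I_(size E)) : 0 <= lam j by have /andP[] := lam01 j (ltn_ord j).
rewrite -sumr_const; apply: le_trans (_ : _ <= \sum_(r in M) \sum_(j in r) lam j) _.
  apply: ler_sum => r /pack[Y Y_F sub_Yr]; apply: le_trans (lam_cov Y Y_F) _.
  by rewrite sum_incident; apply: sum_le_subpred => // j /(subsetP sub_Yr).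
by rewrite -big_trivIset //; apply: sum_le_subpred.
Qed.

Definition laminar F : Prop :=
  forall Y Y', Y \in F -> Y' \in F ->
    [\/ incident Y \subset incident Y', incident Y' \subset incident Y
       | [disjoint incident Y & incident Y']].

Definition min_incidences F : {set {set 'I_(size E)}} :=
  [set r in incident @: F | [forall r' in incident @: F, (r' \subset r) ==> (r' == r)]].

Lemma min_incidences_incident F r :
  r \in min_incidences F -> exists2 Y, Y \in F & r = incident Y.
Proof. by rewrite inE => /andP[/imsetP[Y Y_F ->] _]; exists Y. Qed.

Lemma min_incidences_minimal F r Y :
  r \in min_incidences F -> Y \in F -> incident Y \subset r -> incident Y = r.
Proof.
rewrite inE => /andP[_ /forallP/(_ (incident Y))] r_min Y_F sub_Yr.
by apply/eqP; move: r_min; rewrite imset_f // sub_Yr.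
Qed.

Lemma min_incidences_below F Y :
  Y \in F -> exists2 r, r \in min_incidences F & r \subset incident Y.
Proof.
move=> Y_F; have inc_Y : incident Y \in [set s in incident @: F | s \subset incident Y].
  by rewrite inE imset_f ?subxx.
have [r /setIdP[r_F sub_rY] r_min] := arg_minnP (fun s : {set _} => #|s|) inc_Y.
exists r => //; rewrite /min_incidences inE r_F /=.
apply/forallP => s; apply/implyP => s_F; apply/implyP => sub_sr.
rewrite eqEcard sub_sr r_min //; apply/setIdP; split => //.
exact: subset_trans sub_sr sub_rY.
Qed.

Lemma min_incidences_trivI F : laminar F -> trivIset (min_incidences F).
Proof.
move=> lamF; apply/trivIsetP => r r' r_min r'_min ne_rr'.
have [Y Y_F eq_r] := min_incidences_incident r_min.
have [Y' Y'_F eq_r'] := min_incidences_incident r'_min.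
case: (lamF Y Y' Y_F Y'_F); rewrite -eq_r -eq_r' // => sub.
  by move: ne_rr'; rewrite -(min_incidences_minimal r'_min Y_F) ?eq_r ?eqxx // -eq_r.
by move: ne_rr'; rewrite -(min_incidences_minimal r_min Y'_F) ?eq_r' ?eqxx // -eq_r'.
Qed.

Lemma rho_star_laminar F :
  coverable F -> laminar F -> rho_star R E F = #|min_incidences F|%:R.
Proof.
move=> covF lamF; apply/le_anti/andP; split.
  apply: rho_star_le_transversal => [Y /min_incidences_below //|r].
  case/min_incidences_incident => Y /covF[i Y_i] ->; apply/set0Pn; exists i.
  by rewrite inE.
apply: rho_star_ge_packing => //; first exact: min_incidences_trivI.
by move=> r /min_incidences_incident[Y Y_F ->]; exists Y.
Qed.

End FractionalCovers.

Lemma bigmax_nat (R : archiRealDomainType) (I : Type) (r : seq I) (P : pred I) (f : I -> R) :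
  (forall i, P i -> f i \is a Num.nat) -> \big[Num.max/0]_(i <- r | P i) f i \is a Num.nat.
Proof.
move=> f_nat; elim/big_ind: _ => // x y x_nat y_nat.
by rewrite maxEle; case: ifP.
Qed.

Lemma nat_gap (R : archiNumDomainType) (d w : R) :
  d \is a Num.nat -> w \is a Num.nat -> d <= w -> w <= d + 1 -> d = w \/ d = w - 1.
Proof.
move=> /natrP[m ->] /natrP[n ->]; rewrite ler_nat natr1 ler_nat => le_mn le_nm.
have [->|ne_mn] := eqVneq m n; first by left.
right; have -> : n = m.+1 by apply/eqP; rewrite eqn_leq le_nm ltn_neqAle ne_mn.
by rewrite -natr1 addrK.
Qed.

Section WidthBounds.
Variables (R : realType) (V A : finType) (sch : A -> {set V}) (par : V -> option V).
Hypotheses (par_VO : is_VO sch par) (sch_hier : hierarchical sch).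

Lemma nth_map_sch (L : seq A) i :
  (i < size (map sch L))%N -> exists a, nth set0 (map sch L) i = sch a.
Proof. by elim: L i => [|a L IHL] [|i] //= lt_i; [exists a | exact: IHL]. Qed.

(* The incidence sets of any list of atoms of a hierarchical query mirror *)
(* the sets atoms(Y), so they form a laminar family.                      *)
Lemma laminar_atoms (L : seq A) (F : {set V}) : laminar (map sch L) F.
Proof.
have incident_sub Y Y' : atoms_of sch Y \subset atoms_of sch Y' ->
    incident (map sch L) Y \subset incident (map sch L) Y'.
  move/subsetP => sub_YY'; apply/subsetP => i; rewrite !inE.
  have [a ->] := nth_map_sch (ltn_ord i).
  by move=> Y_a; have := sub_YY' a; rewrite !inE; apply.
move=> Y Y' _ _; case: (sch_hier Y Y') => [sub|[sub|disj]].
- by apply: Or31; apply: incident_sub.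
- by apply: Or32; apply: incident_sub.
apply: Or33; rewrite -setI_eq0; apply/eqP/setP => i; rewrite !inE.
have [a ->] := nth_map_sch (ltn_ord i).
by move: disj; rewrite -setI_eq0 => /eqP/setP/(_ a); rewrite !inE.
Qed.

Lemma QX_coverable X : X \in qvars sch -> coverable (QX sch par X) (X |: dep sch par X).
Proof.
move=> X_q Y Y_S; rewrite (QX_below par_VO sch_hier); set E := map sch _.
suff [b below_b Y_b] : exists2 b, below sch par X b & Y \in sch b.
  have lt_b : (index (sch b) E < size E)%N.
    by rewrite index_mem map_f // mem_filter below_b mem_enum.
  by exists (Ordinal lt_b); rewrite nth_index // -index_mem.
move: Y_S; rewrite in_setU1 => /predU1P[->|].
  case/bigcupP: X_q => a _ X_a; exists a => //.
  by apply: (below_of par_VO X_a); rewrite /ancs eqxx.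
rewrite inE => /andP[_ /existsP[b /andP[Y_b /existsP[Z /andP[Z_b XZ]]]]].
by exists b => //; apply: (below_of par_VO Z_b XZ).
Qed.

Lemma rho_QX_nat X (F : {set V}) :
  X \in qvars sch -> F \subset X |: dep sch par X ->
  rho_star R (QX sch par X) F \is a Num.nat.
Proof.
move=> X_q sub_F; rewrite rho_star_laminar ?natr_nat //.
  by move=> Y /(subsetP sub_F); apply: QX_coverable.
by rewrite (QX_below par_VO sch_hier); apply: laminar_atoms.
Qed.

Lemma deltaVO_nat : deltaVO R sch par \is a Num.nat.
Proof.
apply: bigmax_nat => X X_q; apply: bigmax_nat => e _.
exact: rho_QX_nat X_q (subsetDl _ _).
Qed.

Lemma wVO_nat : wVO R sch par \is a Num.nat.
Proof. by apply: bigmax_nat => X X_q; apply: rho_QX_nat X_q (subxx _). Qed.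

(* Removing the vertices of an atom cannot increase rho_star. *)
Lemma deltaVO_le_wVO : deltaVO R sch par <= wVO R sch par.
Proof.
have w_ge0 := natr_ge0 wVO_nat.
apply: bigmax_le => // X X_q; apply: bigmax_le => // e _.
apply: le_trans (rho_star_mono R (QX_coverable X_q) (subsetDl _ e)) _.
by rewrite /wVO; apply: (bigmax_sup X).
Qed.

(* Removing the vertices of an atom containing X lowers rho_star by at most 1. *)
Lemma wVO_le_deltaVO : wVO R sch par <= deltaVO R sch par + 1.
Proof.
have d_ge0 := natr_ge0 deltaVO_nat.
apply: bigmax_le => [|X X_q]; first by rewrite addr_ge0 ?ler01.
have [i X_i] := QX_coverable X_q (setU11 X _).
apply: le_trans (rho_star_delete R i (QX_coverable X_q)) _; rewrite lerD2r.
rewrite /deltaVO; apply: (bigmax_sup X) => //.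
by apply: (bigmax_sup_seq _ (nth set0 (QX sch par X) i)); rewrite ?mem_nth.
Qed.

End WidthBounds.

(* The bounds hold for every variable order of the hierarchical fracture, *)
(* in particular for the optimal access-top one that defines d and w.    *)
Theorem proposition3p8 (R : realType) (V A : finType) (sch : A -> {set V})
  (kind : V -> vkind) (d w : R) :
  hierarchical (fr_sch sch kind) ->
  cqap_widths sch kind d w ->
  d = w \/ d = w - 1.
Proof.
move=> hier [[par [par_VO _ <- <-]] _].
apply: nat_gap.
- exact: deltaVO_nat par_VO hier.
- exact: wVO_nat par_VO hier.
- exact: deltaVO_le_wVO par_VO hier.
- exact: wVO_le_deltaVO par_VO hier.
Qed.
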